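(* The cone of Hilbert functions of $\Lambda$-modules that are finitely generated in degree zero is simplicial, and its defining inequalities are \[ \frac{H_M(i+1)}{\binom n{i+1}}\le\frac{H_M(i)}{\binom ni},\qquad 0\le i<n. \]
   Context: $\Lambda$ is the standard graded exterior algebra in $n$ variables over a field $\mathbb{k}$ (with its natural $\mathbb{N}^n$-grading). A $\Lambda$-module is a finitely generated graded left $\Lambda$-module which is also a right $\Lambda$-module with $am=(-1)^{\deg a\deg m}ma$ for homogeneous $a\in\Lambda$, $m\in M$. $H_M(i)=\dim_{\mathbb{k}}M_i$ is the Hilbert function. The cone of Hilbert functions is the convex cone in $\mathbb{R}^{\mathbb{N}}$ spanned by the Hilbert functions of all such modules. *)

From mathcomp Require Import all_boot all_order all_algebra.
From mathcomp Require Import reals.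
Set Implicit Arguments. Unset Strict Implicit. Unset Printing Implicit Defensive.
Import Order.TTheory GRing.Theory Num.Theory.
Local Open Scope ring_scope.

(* The exterior algebra  Lambda = k<e_0,...,e_{n-1}> / (e_j e_l + e_l e_j, e_j^2),
   standard-graded with deg e_j = 1.  A graded left Lambda-module which is
   generated in degree 0 is concentrated in degrees >= 0, so it is given by:
   - finite-dimensional k-vector spaces M_i = 'rV[k]_(dim i), i : nat
     (finite dimensionality of each M_i follows from finite generation);
   - the action of each generator e_j as a linear map M_i -> M_{i+1}
     (row vectors: e_j . v = v *m act j i);
   - the defining relations of Lambda: e_j e_j = 0 and e_j e_l = - e_l e_j;
   - generation in degree 0: M_{i+1} = sum_j e_j M_i for every i.
   The right module structure a m = (-1)^(deg a deg m) m a is then determined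
   (and automatically well defined), so it imposes no further condition. *)
Record LamMod0 (k : fieldType) (n : nat) := {
  ldim : nat -> nat;
  lact : 'I_n -> forall i : nat, 'M[k]_(ldim i, ldim i.+1);
  lact_sq : forall (j : 'I_n) (i : nat), lact j i *m lact j i.+1 = 0;
  lact_anti : forall (j l : 'I_n) (i : nat),
      lact j i *m lact l i.+1 = - (lact l i *m lact j i.+1);
  lact_gen0 : forall i : nat, (1%:M <= \sum_(j < n) <<lact j i>>)%MS
}.

Definition hilb (k : fieldType) (n : nat) (M : LamMod0 k n) (i : nat) : nat :=
  ldim M i.

Definition hilb_cone (R : realType) (k : fieldType) (n : nat) : (nat -> R) -> Prop :=
  fun h => exists (m : nat) (c : 'I_m -> R) (M : 'I_m -> LamMod0 k n),
      (forall t, 0 <= c t) /\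
      (forall i : nat, h i = \sum_(t < m) c t * (hilb (M t) i)%:R).

Definition conic_hull (R : realType) (m : nat) (v : 'I_m -> nat -> R)
  : (nat -> R) -> Prop :=
  fun h => exists c : 'I_m -> R, (forall t, 0 <= c t) /\
      (forall i : nat, h i = \sum_(t < m) c t * v t i).

Definition lin_indep (R : realType) (m : nat) (v : 'I_m -> nat -> R) : Prop :=
  forall c : 'I_m -> R, (forall i : nat, \sum_(t < m) c t * v t i = 0) ->
    forall t, c t = 0.

Definition simplicial (R : realType) (C : (nat -> R) -> Prop) : Prop :=
  exists (m : nat) (v : 'I_m -> nat -> R),
    lin_indep v /\ forall h, C h <-> conic_hull v h.

From mathcomp Require Import all_boot all_order all_algebra.
From mathcomp Require Import reals.
From mathcomp Require Import zify.
Set Implicit Arguments. Unset Strict Implicit. Unset Printing Implicit Defensive.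
Import Order.TTheory GRing.Theory Num.Theory.
Local Open Scope ring_scope.

(* Let b range over a basis of M_0. The monomials e_S b with #|S| = i span M_i;
   scanning them in an order compatible with multiplication by each e_s, those
   not in the span of their predecessors form a basis of M_i whose index set is
   closed under deleting an element of S. Counting the pairs (S, s) with s in S
   in two ways then gives (i+1) H(i+1) <= (n-i) H(i), which are the stated
   inequalities. Conversely Lambda truncated above degree j has H(i) = C(n, i)
   for i <= j and 0 beyond; these n+1 functions are linearly independent and
   every h satisfying the inequalities is their combination with the
   nonnegative coefficients h(j)/C(n,j) - h(j+1)/C(n,j+1). *)

Lemma sum_card_partition (X I : finType) (P : pred X) (A : X -> {set I}) :
  (\sum_(x | P x) #|A x| = \sum_(s : I) #|[set x | P x && (s \in A x)]|)%N.
Proof.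
rewrite (eq_bigr (fun x => \sum_(s : I) (s \in A x : nat))%N); last first.
  by move=> x _; rewrite -sum1_card big_mkcond; apply: eq_bigr => s _; case: (s \in A x).
rewrite exchange_big; apply: eq_bigr => s _.
rewrite -sum1dep_card big_mkcond [RHS]big_mkcond /=.
by apply: eq_bigr => x _; case: (P x); case: (s \in A x).
Qed.

Lemma binary_sum_inj m (F G : 'I_m -> bool) :
  (\sum_(t < m) F t * 2 ^ t = \sum_(t < m) G t * 2 ^ t)%N -> F =1 G.
Proof.
elim: m F G => [|m IH] F G H t; first by case: t.
move: H; rewrite !big_ord_recl !expn0 !muln1.
have E (f : 'I_m.+1 -> bool) : (\sum_(i < m) f (lift ord0 i) * 2 ^ (lift ord0 i) =
    2 * \sum_(i < m) f (lift ord0 i) * 2 ^ i)%N.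
  by rewrite big_distrr; apply: eq_bigr => i _; rewrite /= expnS mulnCA.
rewrite !E => H.
have H0 : F ord0 = G ord0 by move: H; case: (F ord0); case: (G ord0) => //= H; lia.
rewrite H0 in H; move/addnI/eqP: H; rewrite eqn_pmul2l // => /eqP H.
have IH' := IH (fun i => F (lift ord0 i)) (fun i => G (lift ord0 i)) H.
by case: (unliftP ord0 t) => [j ->|->] //; apply: IH'.
Qed.

Lemma mxrank_adds_genmx_row (F : fieldType) m p (v : 'rV[F]_m) (U : 'M[F]_(p, m)) :
  \rank (<<v>> + U)%MS = (~~ (v <= U)%MS + \rank U)%N.
Proof.
have [vU|nvU] := boolP (v <= U)%MS.
  by have /addsmx_idPr -> : (<<v>> <= U)%MS by rewrite genmxE.
apply/eqP; rewrite eqn_leq; apply/andP; split.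
  have [le _] := mxrank_adds_leqif <<v>>%MS U.
  by apply: leq_trans le _; rewrite leq_add2r mxrank_gen rank_leq_row.
rewrite add1n (ltn_leqif (mxrank_leqif_sup (addsmxSr _ _))).
apply: contra nvU => H; apply: submx_trans H.
by apply: submx_trans (addsmxSl _ _); rewrite genmxE.
Qed.

Section Monomials.
Variables (k : fieldType) (n : nat) (M : LamMod0 k n).
Local Notation d := (ldim M).
Local Notation e := (lact M).
Local Notation r := (ldim M 0).

Definition set_min (S : {set 'I_n}) : option 'I_n :=
  [pick s in S | [forall t in S, (s <= t)%N]].

Lemma set_min_eq (S : {set 'I_n}) (s : 'I_n) :
  s \in S -> (forall t, t \in S -> (s <= t)%N) -> set_min S = Some s.
Proof.
move=> sS Hs; rewrite /set_min; case: pickP => [s' /andP [s'S /forall_inP Hs']|H].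
  by congr Some; apply/val_inj/eqP; rewrite eqn_leq Hs' // Hs.
by move: (H s); rewrite sS /= => /negbT/negP; case; apply/forall_inP.
Qed.

(* e_S b, with min S acting last; meaningful only when #|S| = i. *)
Fixpoint monomial (i : nat) (S : {set 'I_n}) (b : 'I_r) {struct i} : 'rV[k]_(d i) :=
  match i as i0 return 'rV[k]_(d i0) with
  | 0 => delta_mx 0 b
  | i'.+1 => if set_min S is Some s then monomial i' (S :\ s) b *m e s i' else 0
  end.

Lemma monomialS i (S : {set 'I_n}) (b : 'I_r) (s : 'I_n) :
  set_min S = Some s -> monomial i.+1 S b = monomial i (S :\ s) b *m e s i.
Proof. by move=> /= ->. Qed.

Lemma monomial_act i : forall (S : {set 'I_n}) (b : 'I_r) (s : 'I_n), #|S| = i ->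
  (s \in S -> monomial i S b *m e s i = 0) /\
  (s \notin S -> exists2 c : k, (c = 1 \/ c = -1) &
      monomial i S b *m e s i = c *: monomial i.+1 (s |: S) b).
Proof.
elim: i => [|i IH] S b s cS.
  have -> : S = set0 by apply/eqP; rewrite -cards_eq0 cS.
  split=> [|_]; first by rewrite inE.
  exists 1; first by left.
  rewrite scale1r setU0 (monomialS _ _ (s := s)) //.
  by apply: set_min_eq; rewrite ?set11 // => t; rewrite inE => /eqP->.
have [t tS] : exists t, t \in S by apply/set0Pn; rewrite -cards_eq0 cS.
case: (@arg_minnP _ t (mem S) (fun u : 'I_n => (u : nat)) tS) => m mS0 mmin.
have mS : m \in S := mS0.
have Sm : set_min S = Some m by apply: set_min_eq.
have cSm : #|S :\ m| = i by move: cS; rewrite (cardsD1 m) mS add1n => -[].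
rewrite (monomialS _ _ Sm); have [IH1 IH2] := IH (S :\ m) b s cSm.
split=> [sS|nsS].
  have [->|nsm] := eqVneq s m; first by rewrite -mulmxA lact_sq mulmx0.
  by rewrite -mulmxA lact_anti mulmxN mulmxA IH1 ?mul0mx ?oppr0 // !inE nsm.
have nsSm : s \notin S :\ m by rewrite !inE negb_and nsS orbT.
have nsm : s != m by apply: contraNneq nsS => ->.
have [slt|mlt] := ltnP s m.
  exists 1; first by left.
  rewrite -(monomialS _ _ Sm) scale1r [RHS](monomialS _ _ (s := s)) ?setU1K //.
  apply: set_min_eq => [|u]; first by rewrite setU11.
  by rewrite in_setU1 => /predU1P [->//|uS]; apply: leq_trans (ltnW slt) (mmin _ uS).
have [c Hc Hmul] := IH2 nsSm.
exists (- c); first by case: Hc => ->; [right | left; rewrite opprK].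
rewrite -mulmxA lact_anti mulmxN mulmxA Hmul -scalemxAl -scaleNr.
congr (_ *: _); rewrite [RHS](monomialS _ _ (s := m)).
  congr (monomial _ _ _ *m _); apply/setP => u; rewrite !inE.
  by case: (eqVneq u m) => [->|]; rewrite ?andbF ?andbT //= ?orbF eq_sym (negbTE nsm).
apply: set_min_eq => [|u]; first by rewrite setU1r.
by rewrite in_setU1 => /predU1P [->//|uS]; apply: mmin.
Qed.

Lemma monomial_act_sub i (S : {set 'I_n}) (b : 'I_r) (s : 'I_n)
    m (X : 'M[k]_(m, d i.+1)) :
  #|S| = i -> (s \notin S -> (monomial i.+1 (s |: S) b <= X)%MS) ->
  (monomial i S b *m e s i <= X)%MS.
Proof.
move=> cS H; have [H1 H2] := monomial_act b s cS.
have [sS|nsS] := boolP (s \in S); first by rewrite H1 // sub0mx.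
by have [c _ ->] := H2 nsS; rewrite scalemx_sub // H.
Qed.

Definition monomial_span i : 'M[k]_(d i) :=
  (\sum_(x : {set 'I_n} * 'I_r | #|x.1| == i) <<monomial i x.1 x.2>>)%MS.

Lemma monomial_span_full i : ((1%:M : 'M[k]_(d i)) <= monomial_span i)%MS.
Proof.
elim: i => [|i IH].
  apply/row_subP => b; rewrite row1.
  apply: (sumsmx_sup (set0, b)); first by rewrite /= cards0.
  by rewrite genmxE submx_refl.
apply: submx_trans (lact_gen0 M i) _.
apply/sumsmx_subP => s _; rewrite genmxE.
apply: (submx_trans (B := monomial_span i *m e s i)).
  by rewrite -{1}[e s i]mul1mx submxMr.
rewrite /monomial_span sumsmxMr_gen; apply/sumsmx_subP => x /eqP cx.
rewrite genmxE (eqmxMr _ (genmxE _)).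
apply: (@monomial_act_sub i x.1 x.2 s _ _ cx) => nsx.
apply: (sumsmx_sup (s |: x.1, x.2)); first by rewrite /= cardsU1 nsx cx.
by rewrite genmxE submx_refl.
Qed.

(* A numbering of the pairs (S, b) in which adding s \notin S to S always
   increases the number by the same amount 2^s r; this is what makes the set
   of standard monomials closed under removing an element. *)
Definition monomial_key (x : {set 'I_n} * 'I_r) : nat :=
  ((\sum_(t < n) (t \in x.1) * 2 ^ t) * r + x.2)%N.

Lemma monomial_key_inj : injective monomial_key.
Proof.
move=> [S b] [S' b']; rewrite /monomial_key /= => H.
have r0 : (0 < r)%N by apply: leq_ltn_trans (ltn_ord b).
have Hb : b = b' :> nat by move: (congr1 (modn^~ r) H); rewrite /= !modnMDl !modn_small.
rewrite Hb in H; move/addIn/eqP: H; rewrite eqn_pmul2r // => /eqP HS.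
congr pair; last exact: val_inj.
by apply/setP => t; exact: binary_sum_inj HS t.
Qed.

Lemma monomial_key_setU1 (S : {set 'I_n}) (b : 'I_r) (s : 'I_n) : s \notin S ->
  monomial_key (s |: S, b) = (monomial_key (S, b) + 2 ^ s * r)%N.
Proof.
move=> nsS; rewrite /monomial_key /= (bigD1 s) //= [in RHS](bigD1 s) //=.
rewrite setU11 (negbTE nsS) mul1n mul0n add0n.
under eq_bigr => t nts do rewrite in_setU1 (negbTE nts).
by rewrite mulnDl -addnA addnC.
Qed.

Definition earlier i K (x : {set 'I_n} * 'I_r) :=
  (#|x.1| == i) && (monomial_key x < K)%N.

Definition earlier_span i K : 'M[k]_(d i) :=
  (\sum_(x | earlier i K x) <<monomial i x.1 x.2>>)%MS.

Definition standard i (x : {set 'I_n} * 'I_r) :=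
  (#|x.1| == i) && ~~ (monomial i x.1 x.2 <= earlier_span i (monomial_key x))%MS.

Lemma earlierS i K x :
  earlier i K.+1 x = earlier i K x || (#|x.1| == i) && (monomial_key x == K).
Proof. by rewrite /earlier ltnS leq_eqVlt; case: (_ == i); rewrite //= orbC. Qed.

Lemma rank_earlier_span i K :
  \rank (earlier_span i K) = (\sum_(x | earlier i K x) standard i x)%N.
Proof.
elim: K => [|K IH].
  by rewrite /earlier_span !big_pred0 ?mxrank0 // => x; rewrite /earlier ltn0 andbF.
case: (pickP (fun x : {set 'I_n} * 'I_r => (#|x.1| == i) && (monomial_key x == K)))
  => [x0 /andP [cx0 /eqP kx0] | none]; last first.
  have E x : earlier i K.+1 x = earlier i K x by rewrite earlierS none orbF.
  by rewrite /earlier_span (eq_bigl _ _ E) -/(earlier_span i K) IH; apply: eq_bigl.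
have split_x0 (T : Type) (idx : T) (op : Monoid.com_law idx) F :
    \big[op/idx]_(x | earlier i K.+1 x) F x =
    op (F x0) (\big[op/idx]_(x | earlier i K x) F x).
  rewrite (bigD1 x0) /=; last by rewrite earlierS cx0 kx0 eqxx orbT.
  congr (op _ _); apply: eq_bigl => x; rewrite earlierS.
  have [->|nx] := eqVneq x x0; first by rewrite /= /earlier kx0 ltnn !andbF.
  rewrite andbT; apply/orb_idr => /andP [_ /eqP kx].
  by move/eqP: nx; case; apply: monomial_key_inj; rewrite kx kx0.
rewrite /earlier_span !split_x0 -/(earlier_span i K) mxrank_adds_genmx_row IH.
by rewrite /standard kx0 cx0.
Qed.

Definition standard_count i := (\sum_(x : {set 'I_n} * 'I_r) standard i x)%N.

Lemma standard_count_eq i : standard_count i = d i.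
Proof.
pose K := (\max_(x : {set 'I_n} * 'I_r) monomial_key x).+1.
have earlierK x : earlier i K x = (#|x.1| == i) by rewrite /earlier ltnS leq_bigmax andbT.
have -> : standard_count i = \rank (earlier_span i K).
  rewrite rank_earlier_span /standard_count [in RHS]big_mkcond /=.
  by apply: eq_bigr => x _; rewrite earlierK /standard; case: (_ == i).
apply/eqP; rewrite eqn_leq rank_leq_col -{1}(mxrank1 k (d i)) mxrankS //.
have -> : earlier_span i K = monomial_span i by apply: eq_bigl => x; rewrite earlierK.
exact: monomial_span_full.
Qed.

Lemma standard_setD1 i (x : {set 'I_n} * 'I_r) s :
  standard i.+1 x -> s \in x.1 -> standard i (x.1 :\ s, x.2).
Proof.
case: x => S b /= /andP [/eqP cS nS] sS.
have cSs : #|S :\ s| = i by move: cS; rewrite (cardsD1 s) sS add1n => -[].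
rewrite /standard /= cSs eqxx /=; apply: contra nS => H.
have nsSs : s \notin S :\ s by rewrite !inE eqxx.
have [_ /(_ nsSs) [c Hc]] := monomial_act b s cSs.
rewrite setD1K // => Hm.
have -> : monomial i.+1 S b = c *: (monomial i (S :\ s) b *m e s i).
  by rewrite Hm scalerA; case: Hc => ->; rewrite ?mulr1 ?mulrNN ?mulr1 scale1r.
apply/scalemx_sub/(submx_trans (submxMr (e s i) H)).
rewrite /earlier_span sumsmxMr_gen; apply/sumsmx_subP => -[T c'] /andP [/= /eqP cT kT].
rewrite genmxE (eqmxMr _ (genmxE _)).
apply: (@monomial_act_sub i T c' s _ _ cT) => nsT.
apply: (sumsmx_sup (s |: T, c')); last by rewrite genmxE submx_refl.
rewrite /earlier /= cardsU1 nsT cT eqxx /= monomial_key_setU1 //.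
by rewrite -(setD1K sS) monomial_key_setU1 ?ltn_add2r // !inE eqxx.
Qed.

Lemma standard_count_ineq i :
  (i.+1 * standard_count i.+1 <= (n - i) * standard_count i)%N.
Proof.
have count_scale j c (f : {set 'I_n} * 'I_r -> nat) :
    (forall x, standard j x -> f x = c) ->
    (c * standard_count j = \sum_(x | standard j x) f x)%N.
  move=> Hf; rewrite /standard_count big_distrr [RHS]big_mkcond /=.
  apply: eq_bigr => x _.
  by case: (boolP (standard j x)) => [/Hf ->|_]; rewrite ?muln1 ?muln0.
rewrite (count_scale i.+1 i.+1 (fun x => #|x.1|)); last by move=> x /andP [/eqP].
rewrite (count_scale i (n - i)%N (fun x => #|~: x.1|)); last first.
  by move=> x /andP [/eqP <- _]; rewrite (cardsCs (~: x.1)) setCK card_ord.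
rewrite (sum_card_partition _ (fun x => x.1)) (sum_card_partition _ (fun x => ~: x.1)).
apply: leq_sum => s _.
pose drop_s (x : {set 'I_n} * 'I_r) := (x.1 :\ s, x.2).
have inj : {in [set x | standard i.+1 x && (s \in x.1)] &, injective drop_s}.
  move=> [S b] [S' b']; rewrite !inE /= => /andP [_ sS] /andP [_ sS'] [E ->].
  by rewrite -(setD1K sS) -(setD1K sS') E.
rewrite -(card_in_imset inj); apply/subset_leq_card/subsetP => z.
case/imsetP => x; rewrite inE => /andP [Sx sx] ->.
by rewrite inE standard_setD1 //= !inE eqxx.
Qed.

Lemma hilb_ineq i : (i.+1 * hilb M i.+1 <= (n - i) * hilb M i)%N.
Proof. by rewrite /hilb -!standard_count_eq standard_count_ineq. Qed.

End Monomials.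

Section TruncatedExterior.
Variables (k : fieldType) (n j : nat).

(* Lambda modulo its part of degree > j: basis e_X for #|X| = i <= j, and
   e_s e_X = (-1)^#{t in X | t < s} e_(s |: X) if s \notin X, 0 otherwise. *)
Definition ext_basis i : {set {set 'I_n}} :=
  [set S : {set 'I_n} | (#|S| == i) && (i <= j)%N].
Definition wedge_sign (s : 'I_n) (X : {set 'I_n}) : k :=
  (-1) ^+ #|[set t in X | (t < s)%N]|.
Definition wedge_coef (s : 'I_n) (X Y : {set 'I_n}) : k :=
  if (s \notin X) && (Y == s |: X) then wedge_sign s X else 0.
Definition wedge_mx (s : 'I_n) i : 'M[k]_(#|ext_basis i|, #|ext_basis i.+1|) :=
  \matrix_(x, y) wedge_coef s (enum_val x) (enum_val y).
Definition wedge2_coef (s l : 'I_n) (X Z : {set 'I_n}) : k :=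
  if [&& s \notin X, l \notin s |: X & Z == l |: (s |: X)]
  then wedge_sign s X * wedge_sign l (s |: X) else 0.

Lemma wedge_mxM s l i x z :
  (wedge_mx s i *m wedge_mx l i.+1) x z = wedge2_coef s l (enum_val x) (enum_val z).
Proof.
rewrite mxE.
have HX := enum_valP x; have HZ := enum_valP z.
case: (boolP (s \in enum_val x)) => sX.
  by rewrite /wedge2_coef sX big1 // => y _; rewrite !mxE /wedge_coef sX mul0r.
have HY : s |: enum_val x \in ext_basis i.+1.
  move: HX HZ; rewrite !inE => /andP [/eqP cX _] /andP [_ hj].
  by rewrite cardsU1 sX cX eqxx /= ltnW.
rewrite (bigD1 (enum_rank_in HY (s |: enum_val x))) //= big1 ?addr0.
  rewrite !mxE enum_rankK_in // /wedge_coef sX eqxx /= /wedge2_coef sX /=.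
  by case: (_ && _); rewrite ?mulr0.
move=> y ny; rewrite !mxE /wedge_coef; case: eqP => [E|]; last by rewrite andbF mul0r.
by exfalso; move/negP: ny; apply; rewrite -[y in y == _](enum_valK_in HY) E.
Qed.

Lemma wedge2_coef_diag (s : 'I_n) (X Z : {set 'I_n}) : wedge2_coef s s X Z = 0.
Proof. by rewrite /wedge2_coef setU11 andbF. Qed.

Lemma wedge_sign_setU1 (s l : 'I_n) (X : {set 'I_n}) : s \notin X ->
  wedge_sign l (s |: X) = (if (s < l)%N then - wedge_sign l X else wedge_sign l X).
Proof.
move=> sX; rewrite /wedge_sign; case: ifP => h.
  have -> : [set t in s |: X | (t < l)%N] = s |: [set t in X | (t < l)%N].
    apply/setP => t; rewrite !inE; case: (eqVneq t s) => [->|] //=.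
  by rewrite cardsU1 !inE (negbTE sX) /= exprS mulN1r.
congr (_ ^+ _); apply: eq_card => t; rewrite !inE; case: (eqVneq t s) => [->|] //=.
by rewrite h (negbTE sX).
Qed.

Lemma wedge2_coefC (s l : 'I_n) (X Z : {set 'I_n}) :
  wedge2_coef s l X Z = - wedge2_coef l s X Z.
Proof.
have [->|nsl] := eqVneq s l; first by rewrite wedge2_coef_diag oppr0.
rewrite /wedge2_coef !in_setU1 setUCA (eq_sym l s) (negbTE nsl) /=.
case: (boolP (s \in X)) => sX; first by rewrite /= andbF oppr0.
case: (boolP (l \in X)) => lX; first by rewrite /= oppr0.
case: (_ == _); last by rewrite oppr0.
rewrite /= !wedge_sign_setU1 //.
case: (ltngtP s l) => h.
- by rewrite mulrN mulrC.
- by rewrite mulrN opprK mulrC.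
- by move/eqP: nsl; case; apply: val_inj.
Qed.

Lemma wedge_mx_sq s i : wedge_mx s i *m wedge_mx s i.+1 = 0.
Proof. by apply/matrixP => x z; rewrite wedge_mxM wedge2_coef_diag mxE. Qed.

Lemma wedge_mx_anti s l i :
  wedge_mx s i *m wedge_mx l i.+1 = - (wedge_mx l i *m wedge_mx s i.+1).
Proof.
apply/matrixP => x z; rewrite wedge_mxM wedge2_coefC.
by rewrite [RHS]mxE wedge_mxM.
Qed.

Lemma wedge_mx_gen i : (1%:M <= \sum_(s < n) <<wedge_mx s i>>)%MS.
Proof.
apply/row_subP => z; rewrite row1.
have HZ := enum_valP z.
move: (HZ); rewrite inE => /andP [/eqP cZ hj].
have [s sZ] : exists s, s \in enum_val z.
  by apply/set0Pn; rewrite -cards_eq0 cZ.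
have HX : enum_val z :\ s \in ext_basis i.
  by rewrite inE; move: cZ; rewrite (cardsD1 s) sZ add1n => -[->]; rewrite eqxx ltnW.
pose x := enum_rank_in HX (enum_val z :\ s).
have Hrow : row x (wedge_mx s i) = wedge_sign s (enum_val z :\ s) *: delta_mx 0 z.
  apply/rowP => y; rewrite !mxE enum_rankK_in // /wedge_coef !inE eqxx /= setD1K //.
  case: (eqVneq y z) => [->|nyz]; first by rewrite !eqxx mulr1.
  have -> : (enum_val y == enum_val z) = false.
    by apply/negbTE; apply: contra nyz => /eqP/enum_val_inj ->.
  by rewrite mulr0.
have sn0 : wedge_sign s (enum_val z :\ s) != 0 by rewrite /wedge_sign signr_eq0.
apply: (sumsmx_sup s) => //; rewrite genmxE.
have -> : delta_mx 0 z = (wedge_sign s (enum_val z :\ s))^-1 *: row x (wedge_mx s i).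
  by rewrite Hrow scalerA mulVf // scale1r.
by rewrite scalemx_sub // row_sub.
Qed.

Definition trunc_ext : LamMod0 k n :=
  @Build_LamMod0 k n (fun i => #|ext_basis i|) wedge_mx
    wedge_mx_sq wedge_mx_anti wedge_mx_gen.

Lemma hilb_trunc_ext i : hilb trunc_ext i = (if (i <= j)%N then 'C(n, i) else 0)%N.
Proof.
rewrite /hilb /=; case: ifP => h.
  rewrite -[in RHS](card_ord n) -card_draws; apply: eq_card => S.
  by rewrite !inE h andbT.
by apply/eqP; rewrite cards_eq0; apply/eqP/setP => S; rewrite !inE h andbF.
Qed.

End TruncatedExterior.

Lemma hilb_eq0 (k : fieldType) (n : nat) (M : LamMod0 k n) i :
  (n < i)%N -> hilb M i = 0%N.
Proof.
case: i => [//|i] ni; have := hilb_ineq M i.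
have -> : (n - i = 0)%N by lia.
by rewrite mul0n leqn0 muln_eq0 => /orP [//|/eqP].
Qed.

Section BinomialRays.
Variables (R : numFieldType) (n : nat).
Local Notation C i := ('C(n, i)%:R : R).

Lemma hilb_ratio_le (k : fieldType) (M : LamMod0 k n) i : (i < n)%N ->
  (hilb M i.+1)%:R / C i.+1 <= (hilb M i)%:R / C i.
Proof.
move=> lin.
have C0 : 0 < C i by rewrite ltr0n bin_gt0 ltnW.
have C1 : 0 < C i.+1 by rewrite ltr0n bin_gt0.
rewrite ler_pdivrMr // mulrAC ler_pdivlMr // -!natrM ler_nat.
have H := hilb_ineq M i; have E := mul_bin_left n i.
rewrite -(leq_pmul2l (ltn0Sn i)).
nia.
Qed.

Definition binomial_ray (t : 'I_n.+1) (i : nat) : R :=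
  (if (i <= t)%N then 'C(n, i) else 0)%:R.

Lemma sum_binomial_ray (c : 'I_n.+1 -> R) i :
  \sum_(t < n.+1) c t * binomial_ray t i = C i * \sum_(t < n.+1 | (i <= t)%N) c t.
Proof.
rewrite mulr_sumr [RHS]big_mkcond; apply: eq_bigr => t _.
by rewrite /binomial_ray; case: ifP => _; rewrite ?mulr0 // mulrC.
Qed.

Lemma telescope_binomial_ratio (h : nat -> R) i : (i <= n.+1)%N ->
  \sum_(t < n.+1 | (i <= t)%N) (h t / C t - h t.+1 / C t.+1) =
  h i / C i - h n.+1 / C n.+1.
Proof.
move=> lin; pose q u := h u / C u.
have E := @big_geq_mkord _ _ (@GRing.add R) i n.+1 xpredT (fun t => q t - q t.+1).
rewrite (eq_bigl (fun t : 'I_n.+1 => xpredT (t : nat) && (i <= t)%N)) // -E /=.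
under eq_bigr do rewrite -opprB.
by rewrite sumrN telescope_sumr // opprB.
Qed.

End BinomialRays.

Section HilbertCone.
Variables (R : realType) (k : fieldType) (n : nat).
Local Notation C i := ('C(n, i)%:R : R).

Definition hilb_ineqs (h : nat -> R) : Prop :=
  [/\ (forall i : nat, (n < i)%N -> h i = 0), 0 <= h n &
      (forall i : nat, (i < n)%N -> h i.+1 / C i.+1 <= h i / C i)].

Lemma hilb_cone_ineqs h : hilb_cone k n h -> hilb_ineqs h.
Proof.
move=> [m [c [M [c0 Hh]]]]; split.
- by move=> i ni; rewrite Hh big1 // => t _; rewrite hilb_eq0 // mulr0.
- by rewrite Hh; apply: sumr_ge0 => t _; exact: mulr_ge0 (c0 t) (ler0n _ _).
- move=> i lin; rewrite !Hh !mulr_suml; apply: ler_sum => t _.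
  by rewrite -!mulrA; apply: ler_wpM2l => //; exact: hilb_ratio_le.
Qed.

Lemma ineqs_conic_hull h : hilb_ineqs h -> conic_hull (@binomial_ray R n) h.
Proof.
move=> [H0 Hn Hr]; exists (fun t : 'I_n.+1 => h t / C t - h t.+1 / C t.+1); split.
- move=> t; have := ltn_ord t; rewrite ltnS leq_eqVlt => /orP [/eqP tn|tn].
    by rewrite tn (H0 n.+1) // mul0r subr0 binn divr1.
  by rewrite subr_ge0; exact: Hr.
- move=> i; rewrite sum_binomial_ray; case: (leqP i n) => hi.
    rewrite telescope_binomial_ratio ?leqW // (H0 n.+1) // mul0r subr0 mulrC divfK //.
    by rewrite pnatr_eq0 -lt0n bin_gt0.
  by rewrite bin_small // mul0r; exact: H0.
Qed.

Lemma conic_hull_hilb_cone h : conic_hull (@binomial_ray R n) h -> hilb_cone k n h.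
Proof.
move=> [c [c0 Hh]]; exists n.+1, c, (fun t => trunc_ext k n t); split => // i.
by rewrite Hh; apply: eq_bigr => t _; rewrite hilb_trunc_ext.
Qed.

Lemma binomial_ray_lin_indep : lin_indep (@binomial_ray R n).
Proof.
move=> c Hc.
have tail0 i : (i <= n.+1)%N -> \sum_(t < n.+1 | (i <= t)%N) c t = 0.
  rewrite leq_eqVlt => /orP [/eqP ->|hi].
    by rewrite big_pred0 // => t; rewrite leqNgt ltn_ord.
  have := Hc i; rewrite sum_binomial_ray => /eqP; rewrite mulf_eq0 pnatr_eq0.
  by rewrite eqn0Ngt bin_gt0 -ltnS hi /= => /eqP.
move=> t; have := tail0 t (ltnW (ltn_ord t)); rewrite (bigD1 t) //=.
rewrite (eq_bigl (fun u : 'I_n.+1 => (t.+1 <= u)%N)) ?tail0 ?addr0 //.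
by move=> u; rewrite ltn_neqAle andbC eq_sym.
Qed.

End HilbertCone.

Theorem corollary4p18 (R : realType) (k : fieldType) (n : nat) :
  simplicial (@hilb_cone R k n) /\
  (forall h : nat -> R, @hilb_cone R k n h <->
     [/\ (forall i : nat, (n < i)%N -> h i = 0),
         0 <= h n &
         (forall i : nat, (i < n)%N ->
            h i.+1 / ('C(n, i.+1))%:R <= h i / ('C(n, i))%:R)]).
Proof.
have cone_hull h : hilb_cone k n h <-> conic_hull (@binomial_ray R n) h.
  by split=> [/hilb_cone_ineqs/ineqs_conic_hull|/conic_hull_hilb_cone].
split.
  exists n.+1, (@binomial_ray R n).
  by split; [exact: binomial_ray_lin_indep | exact: cone_hull].
move=> h; split; first exact: hilb_cone_ineqs.
by move/ineqs_conic_hull/conic_hull_hilb_cone.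
Qed.
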